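(* Let $G$ be a finitely generated virtually free group with finite inverse-closed generating set $X$, and let $H$ be a finitely generated subgroup of $G$. Then $\mathsf{GWP}(G,H,X)$ is a deterministic context-free language.
   Context: For a group $G$ with finite generating set $X$ (closed under inverses) and a subgroup $H \le G$, the generalised word problem $\mathsf{GWP}(G,H,X)$ is the set of words over $X$ that represent elements of $H$. A group is virtually free if it has a free subgroup of finite index. A language is deterministic context-free if it is accepted by a deterministic pushdown automaton. *)

From Stdlib Require List.
From mathcomp Require Import all_boot.

Set Implicit Arguments.
Unset Strict Implicit.
Unset Printing Implicit Defensive.

Section GroupDefs.
Variables (T : Type) (mul : T -> T -> T) (one : T) (inv : T -> T).

Record is_group : Prop := IsGroup {
  grp_mulA : forall x y z, mul x (mul y z) = mul (mul x y) z;
  grp_mul1g : forall x, mul one x = x;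
  grp_mulg1 : forall x, mul x one = x;
  grp_mulVg : forall x, mul (inv x) x = one;
  grp_mulgV : forall x, mul x (inv x) = one }.

Definition eval_word (s : seq T) : T := foldr mul one s.

Definition sletter (p : bool * T) : T := if p.1 then inv p.2 else p.2.

Definition generated_by (S : T -> Prop) (x : T) : Prop :=
  exists s : seq (bool * T), (forall p, List.In p s -> S p.2) /\
                             eval_word (map sletter s) = x.

Definition is_subgroup (H : T -> Prop) : Prop :=
  H one /\ (forall x y, H x -> H y -> H (mul x y)) /\ (forall x, H x -> H (inv x)).

Definition fg_subgroup (H : T -> Prop) : Prop :=
  is_subgroup H /\
  exists S : seq T, forall x, H x <-> generated_by (fun y => List.In y S) x.

Fixpoint reduced (s : seq (bool * T)) : Prop :=
  match s with
  | p :: ((q :: _) as s') => ~ (p.2 = q.2 /\ p.1 <> q.1) /\ reduced s'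
  | _ => True
  end.

Definition free_on (F B : T -> Prop) : Prop :=
  (forall x, F x <-> generated_by B x) /\
  (forall s : seq (bool * T), s <> [::] -> (forall p, List.In p s -> B p.2) ->
     reduced s -> eval_word (map sletter s) <> one).

Definition finite_index (F : T -> Prop) : Prop :=
  exists reps : seq T, forall g, exists r, List.In r reps /\ F (mul (inv r) g).

Definition virtually_free : Prop :=
  exists F : T -> Prop, is_subgroup F /\ (exists B, free_on F B) /\ finite_index F.

End GroupDefs.

Record dpda (Sigma : finType) := Dpda {
  dstate : finType;
  dstack : finType;
  dstart : dstate;
  dbottom : dstack;
  dfinal : pred dstate;
  dtrans : dstate -> option Sigma -> dstack -> option (dstate * seq dstack);
  ddet : forall q Z a, dtrans q None Z <> None -> dtrans q (Some a) Z = None }.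

Section DPDA.
Variables (Sigma : finType) (M : dpda Sigma).

Definition dconfig : Type := (dstate M * seq Sigma * seq (dstack M))%type.

Inductive dstep : dconfig -> dconfig -> Prop :=
| dstep_eps q w Z g q' u :
    dtrans q None Z = Some (q', u) -> dstep (q, w, Z :: g) (q', w, u ++ g)
| dstep_read q a w Z g q' u :
    dtrans q (Some a) Z = Some (q', u) -> dstep (q, a :: w, Z :: g) (q', w, u ++ g).

Inductive dsteps : dconfig -> dconfig -> Prop :=
| dsteps_refl c : dsteps c c
| dsteps_step c1 c2 c3 : dstep c1 c2 -> dsteps c2 c3 -> dsteps c1 c3.

Definition daccepts (w : seq Sigma) : Prop :=
  exists q g, dsteps (@dstart _ M, w, [:: @dbottom _ M]) (q, [::], g) /\ @dfinal _ M q.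

End DPDA.

Definition deterministic_context_free (Sigma : finType) (L : seq Sigma -> Prop) : Prop :=
  exists M : dpda Sigma, forall w, L w <-> daccepts M w.

(* Fix a free subgroup F of finite index with a basis B, coset representatives r_i
   (every g has some i with g r_i in F), and generators of H. After reading a word w,
   a pushdown automaton keeps in its finite control an index i with w r_i in F, and on
   its stack the freely reduced spelling of w r_i over finitely many basis letters:
   reading x in coset i pushes, with free cancellation, a fixed spelling of the element
   r_i^-1 x r_j of F. Now w lies in H iff that reduced word spells an element of
   H r_i, and a finite automaton over the basis recognises the reduced words of H r_i
   (Benois); each stack symbol stores the set of its states reached by the stack from
   the bottom up to that symbol, so acceptance is read off the top symbol. *)

From Stdlib Require List.
From HB Require Import structures.
From mathcomp Require Import all_boot.
From mathcomp Require Import boolp.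

Set Implicit Arguments.
Unset Strict Implicit.
Unset Printing Implicit Defensive.

Section FreeReduction.
Variables (A : eqType) (ainv : A -> A).

(* A stack stores a word in reverse: its top is the last letter. *)
Definition push (a : A) (st : seq A) : seq A :=
  if st is b :: st' then (if a == ainv b then st' else a :: st) else [:: a].

Definition reduce (st : seq A) : seq A := foldr push [::] st.

Definition nocancel : rel A := fun a b => b != ainv a.

Definition reduced_stack (st : seq A) : bool := sorted (fun b a => nocancel a b) st.

Lemma reduced_stackE st : reduced_stack st = sorted nocancel (rev st).
Proof. by rewrite rev_sorted. Qed.

Lemma reduced_stack_push a st : reduced_stack st -> reduced_stack (push a st).
Proof.
case: st => [|b st] //= red_st; case: ifP => [_|/negbT ab]; first exact: path_sorted red_st.
by rewrite /= red_st andbT.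
Qed.

Lemma reduced_stack_reduce st : reduced_stack (reduce st).
Proof. by elim: st => //= a st IH; apply: reduced_stack_push. Qed.

Section CancellationClosure.
Variables (Q : Type) (step : Q -> A -> Q -> Prop) (eps : Q -> Q -> Prop).

(* Labels are in stack order: [walk p (a :: st) q] reads [a] last. *)
Inductive walk (p : Q) : seq A -> Q -> Prop :=
| walk_nil : walk p [::] p
| walk_eps st x y : walk p st x -> eps x y -> walk p st y
| walk_step st x a y : walk p st x -> step x a y -> walk p (a :: st) y.

Inductive linked : Q -> Q -> Prop :=
| linked_refl x : linked x x
| linked_eps x y : eps x y -> linked x y
| linked_trans x y z : linked x y -> linked y z -> linked x z
| linked_cancel x y z t a :
    step x a y -> linked y z -> step z (ainv a) t -> linked x t.

(* [linked] adds the detours along freely trivial words, so that [rwalk] reads a reduced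
   stack as a whole walk would read any word reducing to it (Benois). *)
Fixpoint rwalk (p : Q) (st : seq A) (q : Q) : Prop :=
  if st is a :: st' then exists x y, [/\ rwalk p st' x, step x a y & linked y q]
  else linked p q.

Lemma rwalk_linked p st x q : rwalk p st x -> linked x q -> rwalk p st q.
Proof.
case: st => [|a st] /=; first exact: linked_trans.
by move=> [y [z [? ? ?]]] xq; exists y, z; split=> //; apply: linked_trans xq.
Qed.

Lemma walk_rwalk p s q : walk p s q -> rwalk p (reduce s) q.
Proof.
elim=> [|st x y _ IH xy|st x a y _ IH xy] /=.
- exact: linked_refl.
- exact: rwalk_linked IH (linked_eps xy).
- move: IH; case: (reduce st) => [|b st'] /=.
    by move=> px; exists x, y; split=> //; apply: linked_refl.
  move=> [x1 [y1 [p_x1 x1y1 y1x]]]; case: ifP => [/eqP ab|_].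
    by rewrite ab in xy; exact: rwalk_linked p_x1 (linked_cancel x1y1 y1x xy).
  by exists x, y; split; [exists x1, y1 | | apply: linked_refl].
Qed.

End CancellationClosure.
End FreeReduction.

Local Open Scope group_scope.

Section WordValues.
Variables (gT : groupType) (A : eqType) (ainv : A -> A) (phi : A -> gT).
Hypothesis phiV : forall a, phi (ainv a) = (phi a)^-1.

Definition wval (w : seq A) : gT := \prod_(a <- w) phi a.

Lemma wval_cat s t : wval (s ++ t) = wval s * wval t.
Proof. exact: big_cat. Qed.

Lemma wval_rcons s a : wval (rcons s a) = wval s * phi a.
Proof. by rewrite -cats1 wval_cat /wval big_seq1. Qed.

Lemma wval_inverse w : wval (rev (map ainv w)) = (wval w)^-1.
Proof.
elim: w => [|a w IH] /=; first by rewrite /wval big_nil invg1.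
by rewrite rev_cons wval_rcons IH phiV /wval big_cons invgM.
Qed.

Lemma wval_push a st : wval (rev (push ainv a st)) = wval (rev st) * phi a.
Proof.
case: st => [|b st] /=; first by rewrite /wval big_seq1 big_nil mul1g.
case: ifP => [/eqP ->|_]; last by rewrite rev_cons wval_rcons.
by rewrite rev_cons wval_rcons phiV mulgK.
Qed.

Lemma wval_reduce st : wval (rev (reduce ainv st)) = wval (rev st).
Proof. by elim: st => //= a st IH; rewrite wval_push IH rev_cons wval_rcons. Qed.

Section Free.
Hypothesis ainvK : involutive ainv.
Hypothesis free : forall w, w <> [::] -> sorted (nocancel ainv) w -> wval w <> 1.

Lemma sorted_nocancel_inverse w :
  sorted (nocancel ainv) w -> sorted (nocancel ainv) (rev (map ainv w)).
Proof.
rewrite rev_sorted sorted_map => /sub_sorted; apply=> a b /eqP ab.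
by apply/eqP=> e; apply: ab; rewrite /= e ainvK.
Qed.

(* If [a != b], the word [(a :: u)^-1 (b :: v)] is reduced with value [1]. *)
Lemma reduced_word_inj u v : sorted (nocancel ainv) u -> sorted (nocancel ainv) v ->
  wval u = wval v -> u = v.
Proof.
elim: u v => [|a u IH] [|b v] //= red_u red_v e.
- by exfalso; apply: (free (w := b :: v)) => //; rewrite -e /wval big_nil.
- by exfalso; apply: (free (w := a :: u)) => //; rewrite e /wval big_nil.
move: e; rewrite /wval !big_cons -/(wval u) -/(wval v) => e.
have [ab|ab] := eqVneq a b.
  by subst b; rewrite (IH v (path_sorted red_u) (path_sorted red_v) (mulgI _ _ _ e)).
exfalso; apply: (free (w := rev (map ainv (a :: u)) ++ b :: v)).
- by case: (rev _).
- rewrite /= rev_cons cat_rcons sorted_cat_cons /= red_v andbT.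
  have := sorted_nocancel_inverse (w := a :: u) red_u; rewrite /= rev_cons => ->.
  by rewrite /= /nocancel ainvK eq_sym.
- by rewrite wval_cat wval_inverse /wval !big_cons e mulVg.
Qed.

Lemma reduced_stack_inj st1 st2 : reduced_stack ainv st1 -> reduced_stack ainv st2 ->
  wval (rev st1) = wval (rev st2) -> st1 = st2.
Proof.
rewrite !reduced_stackE => red1 red2 e.
by rewrite -(revK st1) (reduced_word_inj red1 red2 e) revK.
Qed.

End Free.

Section Invariants.
Variables (Q : Type) (step : Q -> A -> Q -> Prop) (eps : Q -> Q -> Prop).
Variable inv_at : Q -> gT -> Prop.
Hypothesis step_inv : forall x a y g, step x a y -> inv_at x g -> inv_at y (g * phi a).
Hypothesis eps_inv : forall x y g, eps x y -> inv_at x g -> inv_at y g.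

Lemma linked_inv x y : linked ainv step eps x y -> forall g, inv_at x g -> inv_at y g.
Proof.
elim=> // [x1 y1 /eps_inv //|x1 y1 z1 _ IH1 _ IH2 g /IH1 /IH2 //|].
move=> x1 y1 z1 t1 a x1y1 _ IH z1t1 g /(step_inv x1y1) /IH /(step_inv z1t1).
by rewrite phiV mulgK.
Qed.

Lemma rwalk_inv p st q : rwalk ainv step eps p st q ->
  forall g, inv_at p g -> inv_at q (g * wval (rev st)).
Proof.
elim: st q => [|a st IH] q /=.
  by move=> pq g /(linked_inv pq); rewrite /wval big_nil mulg1.
move=> [x [y [p_x xy yq]]] g /(IH _ p_x) /(step_inv xy) /(linked_inv yq).
by rewrite rev_cons wval_rcons mulgA.
Qed.

End Invariants.
End WordValues.

Section Subdivision.
Variables (A : eqType) (V E : finType) (src tgt : E -> V) (label : E -> seq A).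

Definition max_label : nat := \max_(e : E) size (label e).

Lemma size_label e : size (label e) <= max_label.
Proof. exact: leq_bigmax. Qed.

(* Each edge [e] is subdivided into a path through the states [(e, k)], [k <= size (label e)]. *)
Definition sstate : finType := (V + E * 'I_max_label.+1)%type.

Definition at_edge (e : E) (k : nat) : sstate := inr (e, inord k).

Definition sstep (x : sstate) (a : A) (y : sstate) : Prop :=
  exists e k, [/\ onth (label e) k = Some a, x = at_edge e k & y = at_edge e k.+1].

Definition seps (x y : sstate) : Prop :=
  (exists e, x = inl (src e) /\ y = at_edge e 0) \/
  (exists e, x = at_edge e (size (label e)) /\ y = inl (tgt e)).

Lemma walk_label p st e : walk sstep seps p st (inl (src e)) ->
  walk sstep seps p (rev (label e) ++ st) (inl (tgt e)).
Proof.
move=> p_src.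
have walk_take k : k <= size (label e) ->
    walk sstep seps p (rev (take k (label e)) ++ st) (at_edge e k).
  elim: k => [|k IH] k_le; first by rewrite take0; apply: walk_eps p_src _; left; exists e.
  case a_k : (onth (label e) k) => [a|]; last by move: (onthTE (label e) k); rewrite a_k k_le.
  rewrite (take_nth a k_le) (onth_nth a _ _ _ a_k) rev_rcons.
  by apply: walk_step (IH (ltnW k_le)) _; exists e, k.
have := walk_take _ (leqnn _); rewrite take_size => p_end.
by apply: walk_eps p_end _; right; exists e.
Qed.

Section SubdivisionInvariant.
Variables (gT : groupType) (phi : A -> gT) (vinv : V -> gT -> Prop).
Hypothesis edge_inv : forall e g, vinv (src e) g -> vinv (tgt e) (g * wval phi (label e)).

Definition sinv (x : sstate) (g : gT) : Prop :=
  match x with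
  | inl v => vinv v g
  | inr (e, k) => exists2 h, vinv (src e) h & g = h * wval phi (take k (label e))
  end.

Lemma sinv_at_edge e k g : k <= size (label e) ->
  sinv (at_edge e k) g <-> exists2 h, vinv (src e) h & g = h * wval phi (take k (label e)).
Proof.
by move=> k_le; rewrite /= inordK // ltnS (leq_trans k_le (size_label e)).
Qed.

Lemma sstep_inv x a y g : sstep x a y -> sinv x g -> sinv y (g * phi a).
Proof.
move=> [e [k [a_k -> ->]]].
have k_lt : k < size (label e) by rewrite -onthTE a_k.
move=> /(sinv_at_edge _ (ltnW k_lt)) [h src_h ->]; apply/sinv_at_edge => //.
by exists h; rewrite // (take_nth a k_lt) (onth_nth a _ _ _ a_k) wval_rcons mulgA.
Qed.

Lemma seps_inv x y g : seps x y -> sinv x g -> sinv y g.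
Proof.
case=> [[e [-> ->]] src_g|[e [-> ->]] /sinv_at_edge [//|h src_h ->]].
  by apply/sinv_at_edge => //; exists g; rewrite // take0 /wval big_nil mulg1.
by rewrite take_size; apply: edge_inv.
Qed.

End SubdivisionInvariant.
End Subdivision.

Lemma dsteps_trans (Sigma : finType) (M : dpda Sigma) (c1 c2 c3 : dconfig M) :
  dsteps c1 c2 -> dsteps c2 c3 -> dsteps c1 c3.
Proof. by elim=> // c c' c'' cc' _ IH /IH; apply: dsteps_step. Qed.

Section StackMachine.
Variables (gT : groupType) (A : finType) (ainv : A -> A) (phi : A -> gT).
Hypothesis phiV : forall a, phi (ainv a) = (phi a)^-1.
Variables (X : finType) (iota : X -> gT) (I : finType) (rep : I -> gT).
Variables (Q : finType) (step : Q -> A -> Q -> Prop) (eps : Q -> Q -> Prop).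
Variables (start : Q) (accept : I -> Q).
Variables (word : option (I * X) -> seq A) (next : option (I * X) -> I).
Variable P : gT -> Prop.

Local Notation wval := (wval phi).
Local Notation rwalk := (rwalk ainv step eps start).

(* [None] is the initial move; [Some (i, x)] reads [x] in coset [i]. *)
Hypothesis wval_word_start : wval (word None) = rep (next None).
Hypothesis wval_word_move : forall i x,
  wval (word (Some (i, x))) = (rep i)^-1 * iota x * rep (next (Some (i, x))).
Hypothesis rwalk_accept : forall g st i, reduced_stack ainv st ->
  wval (rev st) = g * rep i -> rwalk st (accept i) <-> P g.

Definition max_word : nat := \max_(c : option (I * X)) size (word c).

Lemma size_word c : size (word c) <= max_word.
Proof. exact: leq_bigmax. Qed.

Definition reach (st : seq A) : {set Q} := [set q | `[< rwalk st q >]].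

Definition reach_step (R : {set Q}) (a : A) : {set Q} :=
  [set q | `[< exists x y, [/\ x \in R, step x a y & linked ainv step eps y q] >]].

Lemma reach_cons a st : reach (a :: st) = reach_step (reach st) a.
Proof.
apply/setP=> q; rewrite !inE; apply/asboolP/asboolP => -[x [y [+ xy yq]]].
  by exists x, y; rewrite inE; split=> //; apply/asboolP.
by rewrite inE => /asboolP st_x; exists x, y.
Qed.

(* A stack symbol records the letter it holds and the states reached by the stack it tops. *)
Definition symbol : finType := (option A * {set Q})%type.

Fixpoint encode (st : seq A) : seq symbol :=
  if st is a :: st' then (Some a, reach st) :: encode st' else [:: (None, reach [::])].

Lemma encodeE st : encode st = (ohead st, reach st) :: behead (encode st).
Proof. by case: st. Qed.

Definition push_symbol (a : A) (Z : symbol) : seq symbol :=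
  if Z.1 is Some b then
    (if a == ainv b then [::] else [:: (Some a, reach_step Z.2 a); Z])
  else [:: (Some a, reach_step Z.2 a); Z].

Lemma encode_push a st :
  push_symbol a (ohead st, reach st) ++ behead (encode st) = encode (push ainv a st).
Proof. by case: st => [|b st] /=; rewrite /push_symbol /= -?reach_cons //; case: ifP. Qed.

(* [inl (c, n)]: [n] letters of [word c] are pushed; [inr (i, b)]: waiting in coset [i],
   accepting iff [b]. *)
Definition state : finType := ((option (I * X) * 'I_max_word.+1) + (I * bool))%type.

Definition transition (q : state) (o : option X) (Z : symbol) :
    option (state * seq symbol) :=
  match q, o with
  | inl (c, n), None =>
      if drop n (word c) is a :: _ then Some (inl (c, inord n.+1), push_symbol a Z)
      else Some (inr (next c, accept (next c) \in Z.2), [:: Z])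
  | inr (i, _), Some x => Some (inl (Some (i, x), ord0), [:: Z])
  | _, _ => None
  end.

Lemma transition_det q Z x : transition q None Z <> None -> transition q (Some x) Z = None.
Proof. by case: q => [[c n]|[i b]]. Qed.

Definition final (q : state) : bool := if q is inr (_, b) then b else false.

Definition machine : dpda X := Dpda (inl (None, ord0)) (None, reach [::]) final transition_det.

Definition value_inv (p : seq X) (q : state) (st : seq A) : Prop :=
  match q with
  | inl (c, n) => wval (rev st) * wval (drop n (word c)) = \prod_(x <- p) iota x * rep (next c)
  | inr (i, b) => wval (rev st) = \prod_(x <- p) iota x * rep i /\ b = (accept i \in reach st)
  end.

Definition config_inv (p : seq X) (q : state) (stk : seq symbol) : Prop :=
  exists st, [/\ stk = encode st, reduced_stack ainv st & value_inv p q st].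

Lemma config_inv_start : config_inv [::] (inl (None, ord0)) [:: (None, reach [::])].
Proof. by exists [::]; split=> //=; rewrite drop0 wval_word_start /wval !big_nil !mul1g. Qed.

Lemma config_inv_final p i b stk : config_inv p (inr (i, b)) stk ->
  b = true <-> P (\prod_(x <- p) iota x).
Proof.
move=> [st [_ red_st [wval_st ->]]]; rewrite inE -(rwalk_accept red_st wval_st).
by split=> /asboolP.
Qed.

Lemma config_inv_stack p q stk : config_inv p q stk ->
  exists st, [/\ stk = (ohead st, reach st) :: behead (encode st), reduced_stack ainv st &
                  value_inv p q st].
Proof. by move=> [st [-> ? ?]]; exists st; rewrite -encodeE. Qed.

Lemma dstep_inv p q r stk q' r' stk' :
  dstep (M := machine) (q, r, stk) (q', r', stk') -> config_inv p q stk ->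
  (r' = r /\ config_inv p q' stk') \/ (exists2 x, r = x :: r' & config_inv (rcons p x) q' stk').
Proof.
move=> qq'; inversion qq' as [q0 w Z g q1 u tr|q0 x w Z g q1 u tr]; subst => {qq'}.
- move=> /config_inv_stack [st [[? ?] red_st inv_st]]; subst; left; split=> //.
  case: q tr inv_st => [[c n]|[i b]] //=; case word_c: (drop n (word c)) => [|a rest] [<- <-].
    rewrite /wval big_nil mulg1 => inv_st; exists st; split=> //.
    by rewrite /= -encodeE.
  move=> inv_st; exists (push ainv a st); split.
  + by rewrite -encode_push.
  + exact: reduced_stack_push.
  have n_lt : n < size (word c) by rewrite -subn_gt0 -size_drop word_c.
  rewrite /= inordK; last by rewrite ltnS (leq_trans n_lt (size_word c)).
  have -> : drop n.+1 (word c) = rest by rewrite -add1n -drop_drop word_c /= drop0.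
  by rewrite (wval_push phiV) -inv_st -mulgA /wval big_cons.
- case: q tr => [[c n]|[i b]] //= [<- <-].
  move=> /config_inv_stack [st [[? ?] red_st [inv_st _]]]; subst; right; exists x => //.
  exists st; split=> //; first by rewrite /= -encodeE.
  by rewrite /= drop0 wval_word_move inv_st big_rcons !mulgA mulgK.
Qed.

Lemma dstep_eps_inv p q r stk q' stk' :
  dstep (M := machine) (q, r, stk) (q', r, stk') -> config_inv p q stk -> config_inv p q' stk'.
Proof. by move=> qq' /(dstep_inv qq') [[_ //]|[x /(congr1 size) /n_Sn]]. Qed.

Lemma dsteps_inv (c1 c2 : dconfig machine) : dsteps c1 c2 ->
  forall p, config_inv p c1.1.1 c1.2 ->
  exists2 p', p ++ c1.1.2 = p' ++ c2.1.2 & config_inv p' c2.1.1 c2.2.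
Proof.
elim=> [c p|[[q r] stk] [[q' r'] stk'] c3 c12 _ IH p /(dstep_inv c12)] /=.
  by exists p.
case=> [[r'E /IH]|[x -> /IH [p' e inv3]]]; first by rewrite r'E.
by exists p' => //; rewrite -e cat_rcons.
Qed.

Lemma busy_run p c (n : 'I_max_word.+1) stk r : config_inv p (inl (c, n)) stk ->
  exists i b stk', dsteps (M := machine) (inl (c, n), r, stk) (inr (i, b), r, stk') /\
                   config_inv p (inr (i, b)) stk'.
Proof.
move kE: (size (word c) - n) => k; elim: k n stk kE => [|k IH] n stk kE inv_c;
  have [st [stkE _ _]] := config_inv_stack inv_c; rewrite {}stkE in inv_c *.
- have word_c : drop n (word c) = [::] by apply/eqP; rewrite -size_eq0 size_drop kE.
  set Z := (ohead st, reach st); set g := behead _.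
  have c_step : dstep (M := machine) (inl (c, n), r, Z :: g)
      (inr (next c, accept (next c) \in Z.2), r, [:: Z] ++ g).
    by apply: dstep_eps; rewrite /= word_c.
  exists (next c), (accept (next c) \in Z.2), ([:: Z] ++ g); split.
    exact: dsteps_step c_step (dsteps_refl _).
  exact: dstep_eps_inv c_step inv_c.
- case word_c: (drop n (word c)) => [|a rest]; first by move: kE; rewrite -size_drop word_c.
  set Z := (ohead st, reach st); set g := behead _.
  have c_step : dstep (M := machine) (inl (c, n), r, Z :: g)
      (inl (c, inord n.+1), r, push_symbol a Z ++ g).
    by apply: dstep_eps; rewrite /= word_c.
  have n_lt : n < size (word c) by rewrite -subn_gt0 kE.
  have kE' : size (word c) - @inord max_word n.+1 = k.
    by rewrite inordK ?subnS ?kE // ltnS (leq_trans n_lt (size_word c)).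
  have [i [b [stk' [run inv']]]] := IH _ _ kE' (dstep_eps_inv c_step inv_c).
  by exists i, b, stk'; split=> //; apply: dsteps_step c_step run.
Qed.

Lemma idle_run r p i b stk : config_inv p (inr (i, b)) stk ->
  exists i' b' stk', dsteps (M := machine) (inr (i, b), r, stk) (inr (i', b'), [::], stk') /\
                     config_inv (p ++ r) (inr (i', b')) stk'.
Proof.
elim: r p i b stk => [|x r IH] p i b stk inv_i.
  by exists i, b, stk; rewrite cats0; split=> //; apply: dsteps_refl.
have [st [stkE _ _]] := config_inv_stack inv_i; rewrite {}stkE in inv_i *.
set Z := (ohead st, reach st); set g := behead _.
have x_step : dstep (M := machine) (inr (i, b), x :: r, Z :: g)
    (inl (Some (i, x), ord0), r, [:: Z] ++ g) by apply: dstep_read.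
have [[/(congr1 size) /n_Sn //]|[_ [<-] inv_x]] := dstep_inv x_step inv_i.
have [i1 [b1 [stk1 [run1 inv1]]]] := busy_run r inv_x.
have [i2 [b2 [stk2 [run2 inv2]]]] := IH _ _ _ _ inv1.
exists i2, b2, stk2; rewrite -cat_rcons; split=> //.
by apply: dsteps_step x_step (dsteps_trans run1 run2).
Qed.

Lemma machine_dcf : deterministic_context_free (fun w : seq X => P (\prod_(x <- w) iota x)).
Proof.
exists machine => w; split.
- have [i1 [b1 [stk1 [run1 inv1]]]] := busy_run w config_inv_start.
  have [i2 [b2 [stk2 [run2 /config_inv_final inv2]]]] := idle_run w inv1.
  by move=> /inv2 b2E; exists (inr (i2, b2)), stk2; split=> //; apply: dsteps_trans run1 run2.
- move=> [q [stk [run fin_q]]]; have [p /= e] := dsteps_inv run config_inv_start.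
  rewrite cats0 in e; subst p; clear run.
  by case: q fin_q => [[c n]|[i b]] //= -> /config_inv_final <-.
Qed.

End StackMachine.

Lemma InP (T : eqType) (x : T) (s : seq T) : reflect (List.In x s) (x \in s).
Proof.
elim: s => [|y s IH] /=; first by constructor.
by rewrite inE eq_sym; apply: (iffP orP) => -[/eqP|/IH]; auto.
Qed.

Lemma eval_wordE (gT : groupType) (s : seq gT) : eval_word *%g 1 s = \prod_(x <- s) x.
Proof. by elim: s => [|x s IH]; rewrite ?big_nil ?big_cons //= IH. Qed.

Section FiniteBasis.
Variables (gT : groupType) (F B : gT -> Prop).
Hypothesis freeFB : free_on *%g 1 inv F B.

Definition basis_word (g : gT) : seq (bool * gT) :=
  if pselect (F g) is left Fg then sval (cid (proj1 (proj1 freeFB g) Fg)) else [::].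

Lemma B_basis_word g p : List.In p (basis_word g) -> B p.2.
Proof.
rewrite /basis_word; case: pselect => // Fg.
by case: (svalP (cid (proj1 (proj1 freeFB g) Fg))) => basis_s _; apply: basis_s.
Qed.

Lemma prod_basis_word g : F g -> \prod_(p <- basis_word g) sletter inv p = g.
Proof.
rewrite /basis_word; case: pselect => // Fg _.
by case: (svalP (cid (proj1 (proj1 freeFB g) Fg))) => _; rewrite eval_wordE big_map.
Qed.

Variables (K : finType) (y : K -> gT).

Definition letters : seq gT := flatten [seq map snd (basis_word (y k)) | k <- enum K].

Definition letter : finType := (bool * seq_sub letters)%type.
Definition letter_inv (a : letter) : letter := (~~ a.1, a.2).
Definition letter_val (a : letter) : gT := sletter inv (a.1, ssval a.2).

Lemma letter_invK (a : letter) : letter_inv (letter_inv a) = a.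
Proof. by case: a => [[] z]. Qed.

Lemma letter_valV a : letter_val (letter_inv a) = (letter_val a)^-1.
Proof. by case: a => [[] z]; rewrite /letter_val /sletter /= ?invgK. Qed.

Lemma B_letters z : z \in letters -> B z.
Proof.
move=> /flattenP [_ /mapP [k _ ->] /mapP [p /InP p_in ->]].
exact: B_basis_word p_in.
Qed.

Definition to_letters (s : seq (bool * gT)) : seq letter :=
  pmap (fun p => omap (pair p.1) (insub p.2)) s.

Definition letter_word (k : K) : seq letter := to_letters (basis_word (y k)).

Lemma wval_letter_word k : F (y k) -> wval letter_val (letter_word k) = y k.
Proof.
move=> Fy; rewrite -[RHS](prod_basis_word Fy) /letter_word.
have : {subset map snd (basis_word (y k)) <= letters}.
  move=> z z_in; apply/flattenP; exists (map snd (basis_word (y k))) => //.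
  by apply: map_f; rewrite mem_enum.
elim: (basis_word (y k)) => [|[b z] s IH] sub_s; first by rewrite /wval !big_nil.
have z_in : z \in letters by apply: sub_s; rewrite inE eqxx.
rewrite /= insubT /= /wval !big_cons -/(wval _ _) IH // => z' z'_in.
by apply: sub_s; rewrite inE z'_in orbT.
Qed.

Definition to_basis (w : seq letter) : seq (bool * gT) := map (fun a => (a.1, ssval a.2)) w.

Lemma wval_to_basis w : wval letter_val w = eval_word *%g 1 (map (sletter inv) (to_basis w)).
Proof. by rewrite eval_wordE big_map big_map. Qed.

Lemma B_to_basis w p : List.In p (to_basis w) -> B p.2.
Proof. by move=> /List.in_map_iff [a [<- _]]; apply: B_letters (ssvalP a.2). Qed.

Lemma F_wval w : F (wval letter_val w).
Proof. by apply/(proj1 freeFB); rewrite wval_to_basis; eexists; split; first exact: B_to_basis. Qed.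

Lemma wval_letters_neq1 w :
  w <> [::] -> sorted (nocancel letter_inv) w -> wval letter_val w <> 1.
Proof.
move=> w_nil red_w; rewrite wval_to_basis; apply: (proj2 freeFB).
- by case: w w_nil {red_w}.
- exact: B_to_basis.
elim: w {w_nil} red_w => //= a [|b w] IH //= /andP [ab red_bw]; split; last exact: IH.
move=> [/val_inj b2 /eqP b1]; move: ab; rewrite /nocancel /letter_inv b2; apply/negP/negPn.
by case: (a) (b) b1 => [[] ?] [[] ?].
Qed.

End FiniteBasis.

Section SubgroupMembership.
Variables (gT : groupType) (X : finType) (iota : X -> gT).
Variables (F B : gT -> Prop) (reps : seq gT) (H : gT -> Prop) (S : seq gT).
Hypothesis F_subgroup : is_subgroup *%g 1 inv F.
Hypothesis freeFB : free_on *%g 1 inv F B.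
Hypothesis reps_cover : forall g, exists r, List.In r reps /\ F (r^-1 * g).
Hypothesis H_gen : forall g, H g <-> generated_by *%g 1 inv (fun s => List.In s S) g.

Lemma F_mul x y : F x -> F y -> F (x * y).
Proof. by case: F_subgroup => _ [F_mul _]; apply: F_mul. Qed.

Lemma F_inv x : F x -> F x^-1.
Proof. by case: F_subgroup => _ [_ F_inv]; apply: F_inv. Qed.

Definition coset : finType := seq_sub reps.
Definition rep (i : coset) : gT := ssval i.

Lemma exists_coset g : exists i : coset, F (g * rep i).
Proof.
have [r [/InP r_in /F_inv]] := reps_cover g^-1.
by rewrite invgM !invgK => Fgr; exists (SeqSub r_in).
Qed.

Definition coset_of (g : gT) : coset := sval (cid (exists_coset g)).

Lemma coset_ofP g : F (g * rep (coset_of g)).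
Proof. exact: svalP (cid (exists_coset g)). Qed.

Definition generator : finType := (bool * seq_sub S)%type.
Definition gen_val (s : generator) : gT := sletter inv (s.1, ssval s.2).

Lemma H1 : H 1.
Proof. by apply/H_gen; exists [::]. Qed.

Lemma H_mul_gen g s : H g -> H (g * gen_val s).
Proof.
move=> /H_gen [sg [sg_S <-]]; apply/H_gen; exists (rcons sg (s.1, ssval s.2)); split.
  move=> p; rewrite -cats1 => /(List.in_app_or _ _ _) [/sg_S //|[<- /=|[]]]; exact/InP/ssvalP.
by rewrite !eval_wordE map_rcons big_rcons.
Qed.

Definition move_coset (i : coset) (x : X) := coset_of ((rep i)^-1 * iota x).
Definition gen_coset (j : coset) (s : generator) := coset_of ((rep j)^-1 * gen_val s).

(* The elements of [F] spelled out in the basis: moves of the machine,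
   and the edges of the automaton accepting the reduced words of [H rep_i ∩ F]. *)
Definition key : finType := option ((coset * X) + ((coset * generator) + (coset * coset))).

Definition key_val (k : key) : gT :=
  match k with
  | None => rep (coset_of 1)
  | Some (inl (i, x)) => (rep i)^-1 * iota x * rep (move_coset i x)
  | Some (inr (inl (j, s))) => (rep j)^-1 * gen_val s * rep (gen_coset j s)
  | Some (inr (inr (j, i))) => (rep j)^-1 * rep i
  end.

Local Notation letter := (letter freeFB key_val).
Local Notation word := (letter_word freeFB key_val).
Local Notation wval := (wval (letter_val (freeFB := freeFB) (y := key_val))).

Lemma wval_word_start : wval (word None) = rep (coset_of 1).
Proof. by rewrite wval_letter_word //; have := coset_ofP 1; rewrite mul1g. Qed.

Lemma wval_word_move i x : wval (word (Some (inl (i, x)))) = key_val (Some (inl (i, x))).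
Proof. exact/wval_letter_word/coset_ofP. Qed.

Lemma wval_word_gen j s : wval (word (Some (inr (inl (j, s))))) = key_val (Some (inr (inl (j, s)))).
Proof. exact/wval_letter_word/coset_ofP. Qed.

Definition closes (j i : coset) : bool := `[< F ((rep j)^-1 * rep i) >].

(* [Some (j, false)]: at coset [j]; [Some (i, true)]: accepting for coset [i]. *)
Definition hstate : finType := option (coset * bool).
Definition hedge : finType := option ((coset * generator) + (coset * coset)).

Definition hsrc (e : hedge) : hstate :=
  match e with
  | None => None
  | Some (inl (j, _)) | Some (inr (j, _)) => Some (j, false)
  end.

Definition htgt (e : hedge) : hstate :=
  match e with
  | None => Some (coset_of 1, false)
  | Some (inl (j, s)) => Some (gen_coset j s, false)
  | Some (inr (j, i)) => if closes j i then Some (i, true) else Some (j, false)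
  end.

Definition hlabel (e : hedge) : seq letter :=
  match e with
  | None => word None
  | Some (inl (j, s)) => word (Some (inr (inl (j, s))))
  | Some (inr (j, i)) => if closes j i then word (Some (inr (inr (j, i)))) else [::]
  end.

Definition hinv (q : hstate) (g : gT) : Prop :=
  if q is Some (j, _) then exists2 h, H h & g = h * rep j else g = 1.

Lemma hedge_inv e g : hinv (hsrc e) g -> hinv (htgt e) (g * wval (hlabel e)).
Proof.
case: e => [[[j s]|[j i]]|] /=.
- move=> [h Hh ->]; exists (h * gen_val s); first exact: H_mul_gen.
  by rewrite wval_word_gen /= !mulgA mulgK.
- rewrite /closes; case: asboolP => [Fji|_] [h Hh ->]; exists h => //.
    by rewrite wval_letter_word //= !mulgA mulgK.
  by rewrite /wval big_nil mulg1.
- by move=> ->; exists 1; [exact: H1 | rewrite /= wval_word_start !mul1g].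
Qed.

Local Notation hstep := (sstep (label := hlabel)).
Local Notation heps := (seps hsrc htgt (label := hlabel)).
Local Notation hwalk := (walk hstep heps (inl None)).
Local Notation hrwalk := (rwalk (letter_inv (y := key_val)) hstep heps (inl None)).

Lemma walk_generators sg : (forall p, List.In p sg -> List.In p.2 S) ->
  exists j st, hwalk st (inl (Some (j, false))) /\
               wval (rev st) = \prod_(p <- sg) sletter inv p * rep j.
Proof.
elim/last_ind: sg => [|sg p IH] sg_S.
  exists (coset_of 1), (rev (hlabel None) ++ [::]); split.
    exact: (walk_label (e := None) (walk_nil _ _ _)).
  by rewrite cats0 revK wval_word_start big_nil mul1g.
have [|j [st [walk_st wval_st]]] := IH.
  by move=> q q_in; apply: sg_S; rewrite -cats1; apply: List.in_or_app; left.
have /InP p_S : List.In p.2 S.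
  by apply: sg_S; rewrite -cats1; apply: List.in_or_app; right; left.
pose s : generator := (p.1, SeqSub p_S).
exists (gen_coset j s), (rev (hlabel (Some (inl (j, s)))) ++ st); split.
  exact: (walk_label (e := Some (inl (j, s))) walk_st).
rewrite rev_cat revK wval_cat wval_st wval_word_gen big_rcons /= !mulgA mulgK.
by rewrite /gen_val /= -surjective_pairing.
Qed.

Lemma rwalk_accept g st i : reduced_stack (letter_inv (y := key_val)) st ->
  wval (rev st) = g * rep i -> hrwalk st (inl (Some (i, true))) <-> H g.
Proof.
move=> red_st wval_st; split.
  move=> /(rwalk_inv (letter_valV (y := key_val)) (sstep_inv (src := hsrc) (vinv := hinv))
          (seps_inv hedge_inv)) /(_ 1 erefl) [h Hh].
  by rewrite mul1g wval_st => /mulIg ->.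
move=> /H_gen [sg [sg_S sgE]].
have [j [st0 [walk_st0 wval_st0]]] := walk_generators sg_S.
have prod_sg : \prod_(p <- sg) sletter inv p = g by rewrite -sgE eval_wordE big_map.
rewrite prod_sg in wval_st0.
have ji : closes j i.
  apply/asboolP; have := F_mul (F_inv (F_wval (rev st0))) (F_wval (rev st)).
  by rewrite wval_st0 wval_st invgM -!mulgA mulKg.
have walk_s : hwalk (rev (hlabel (Some (inr (j, i)))) ++ st0) (inl (Some (i, true))).
  by have := walk_label (e := Some (inr (j, i))) walk_st0; rewrite /= ji.
have := walk_rwalk (letter_inv (y := key_val)) walk_s; congr hrwalk.
refine (reduced_stack_inj (letter_valV (y := key_val)) (letter_invK (y := key_val))
  (wval_letters_neq1 (y := key_val)) (reduced_stack_reduce _ _) red_st _).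
rewrite (wval_reduce (letter_valV (y := key_val))) rev_cat revK wval_cat wval_st0 wval_st /=.
rewrite ji wval_letter_word /=; last exact/asboolP.
by rewrite -mulgA mulVKg.
Qed.

Lemma subgroup_dcf : deterministic_context_free (fun w : seq X => H (\prod_(x <- w) iota x)).
Proof.
pose word_of c := if c is Some (i, x) then word (Some (inl (i, x))) else word None.
pose next c := if c is Some (i, x) then move_coset i x else coset_of 1.
apply: (machine_dcf (letter_valV (y := key_val)) (rep := rep) (word := word_of) (next := next)
          (accept := fun i => inl (Some (i, true))) wval_word_start).
- by move=> i x; rewrite /word_of wval_word_move.
- exact: rwalk_accept.
Qed.

End SubgroupMembership.

Section GroupOfAxioms.
Variables (T : Type) (mul : T -> T -> T) (one : T) (inv : T -> T).

(* The proof argument only lets the canonical group structure depend on [is_group]. *)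
Definition group_of_axioms of is_group mul one inv : Type := {classic T}.

Variable HG : is_group mul one inv.
HB.instance Definition _ := Choice.on (group_of_axioms HG).
HB.instance Definition _ := isGroup.Build (group_of_axioms HG)
  (grp_mulA HG) (grp_mul1g HG) (grp_mulg1 HG) (grp_mulVg HG) (grp_mulgV HG).

End GroupOfAxioms.

Unset Implicit Arguments.
Theorem theorem1p3
  (T : Type) (mul : T -> T -> T) (one : T) (inv : T -> T)
  (HG : is_group mul one inv)
  (X : finType) (iota : X -> T)
  (iota_inj : injective iota)
  (X_inv_closed : forall x : X, exists y : X, iota y = inv (iota x))
  (X_generates : forall g : T, generated_by mul one inv (fun y => exists x, iota x = y) g)
  (G_vfree : virtually_free mul one inv)
  (H : T -> Prop) (H_fg : fg_subgroup mul one inv H) :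
  deterministic_context_free (fun w : seq X => H (eval_word mul one (map iota w))).
Proof.
case: G_vfree => F [F_subgroup [[B freeFB] [reps reps_cover]]].
case: H_fg => _ [S H_gen].
have := subgroup_dcf (gT := group_of_axioms HG) iota F_subgroup freeFB reps_cover H_gen.
congr deterministic_context_free; apply: funext => w.
by have := eval_wordE (gT := group_of_axioms HG) (map iota w); rewrite big_map => <-.
Qed.
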